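(* (Dual SDP upper bound for the $\ell_\infty$-FGL of two-layer networks.) Let $W\in\mathbb{R}^{n\times m}$, $u\in\mathbb{R}^{1\times n}$ and real numbers $a\le b$. Suppose $\zeta\in\mathbb{R}$, $\lambda\in\mathbb{R}^n_+$, $\tau\in\mathbb{R}^m_+$ are such that, with $T_1=\mathrm{diag}(\lambda)$ and $T_2=\mathrm{diag}(\tau)$, the $(1+m+n)\times(1+m+n)$ block matrix satisfies $$\begin{pmatrix}\sum_{j=1}^m\tau_j-\zeta& 0& u\\ 0& -2ab\,W^TT_1W-T_2& (a+b)W^TT_1\\ u^T& (a+b)T_1W& -2T_1\end{pmatrix}\preceq0 .$$ Then $$\frac{\zeta}{2}\;\ge\;\max_{y\in[a,b]^n}\big\|W^T\mathrm{diag}(y)u^T\big\|_1 .$$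
   Context: $\mathrm{diag}(v)$ is the diagonal matrix with diagonal $v$; $P\preceq0$ means $-P$ is positive semidefinite; $\mathbb{R}_+=[0,\infty)$. For ReLU ($a=0,b=1$) the right-hand side is at least the $\ell_\infty$ formal global Lipschitz constant $\max_{y\in\{0,1\}^n}\|W^T\mathrm{diag}(y)u^T\|_1$ of $x\mapsto u\,\mathrm{ReLU}(Wx)$. *)

From HB Require Import structures.
From mathcomp Require Export all_boot all_order all_algebra.
Set Implicit Arguments. Unset Strict Implicit. Unset Printing Implicit Defensive.
Import Order.TTheory GRing.Theory Num.Theory.
Local Open Scope ring_scope.

Definition psd (R : realFieldType) (k : nat) (P : 'M[R]_k) : Prop :=
  forall x : 'cV[R]_k, 0 <= (x^T *m P *m x) 0 0.

Definition nsd (R : realFieldType) (k : nat) (P : 'M[R]_k) : Prop := psd (- P).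

Definition l1norm (R : realFieldType) (k : nat) (v : 'cV[R]_k) : R :=
  \sum_(j < k) `|v j 0|.

Definition dual_block (R : realFieldType) (n m : nat)
  (W : 'M[R]_(n, m)) (u : 'rV[R]_n) (a b zeta : R)
  (lambda : 'rV[R]_n) (tau : 'rV[R]_m) : 'M[R]_(1 + m + n) :=
  let T1 := diag_mx lambda in
  let T2 := diag_mx tau in
  block_mx
    (block_mx ((\sum_(j < m) tau 0 j - zeta)%:M : 'M[R]_1) 0
              0 (- (2 * a * b) *: (W^T *m T1 *m W) - T2))
    (col_mx u ((a + b) *: (W^T *m T1)))
    (row_mx u^T ((a + b) *: (T1 *m W)))
    (- 2%:R *: T1).

From HB Require Import structures.
From mathcomp Require Import all_boot all_order all_algebra ring lra.
Import Order.TTheory GRing.Theory Num.Theory.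
Local Open Scope ring_scope.

(* Evaluate the quadratic form of the dual block matrix at x = (1, v, w), where
   v = sg (W^T diag(y) u^T) and w = diag(y) W v.  The tau-block contributes
   sum_j tau_j (1 - v_j^2) >= 0, the lambda-block contributes
   sum_i 2 lambda_i (y_i - a) (b - y_i) (W v)_i^2 >= 0 because y lies in [a, b],
   and the cross term 2 u w equals 2 v^T W^T diag(y) u^T = 2 ||W^T diag(y) u^T||_1.
   Negative semidefiniteness then gives 2 ||W^T diag(y) u^T||_1 - zeta <= 0. *)

Lemma nsd_form_le0 {R : realFieldType} {k} {P : 'M[R]_k} :
  nsd P -> forall x : 'cV[R]_k, (x^T *m P *m x) 0 0 <= 0.
Proof. by move=> hP x; move: (hP x); rewrite mulmxN mulNmx mxE oppr_ge0. Qed.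

Lemma diag_form (R : comPzSemiRingType) k (p q : 'cV[R]_k) (d : 'rV[R]_k) :
  p^T *m diag_mx d *m q = (\sum_i d 0 i * p i 0 * q i 0)%:M.
Proof.
apply/matrixP => i j; rewrite !ord1 !mxE mulr1n.
by apply: eq_bigr => l _; rewrite mul_mx_diag !mxE (mulrC (p l 0)).
Qed.

Section DualBlockForm.
Variables (R : realFieldType) (n m : nat) (W : 'M[R]_(n, m)) (u : 'rV[R]_n)
  (a b zeta : R) (lambda : 'rV[R]_n) (tau : 'rV[R]_m).

Lemma dual_block_form (v : 'cV[R]_m) (w : 'cV[R]_n) :
  let x := col_mx (col_mx 1 v) w in let p := W *m v in
  (x^T *m dual_block W u a b zeta lambda tau *m x) 0 0 =
  \sum_j tau 0 j * (1 - v j 0 ^+ 2) - zeta + 2 * (u *m w) 0 0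
  + \sum_i lambda 0 i *
      (2 * (a + b) * p i 0 * w i 0 - 2 * a * b * p i 0 ^+ 2 - 2 * w i 0 ^+ 2).
Proof.
rewrite /dual_block !tr_col_mx !mul_row_block !mul_mx_row !mul_row_col.
rewrite !(mulmx0, mul0mx, addr0, add0r, trmx1, mul1mx, mulmx1).
rewrite !(mulmxDl, mulmxDr, mulmxBl, mulmxBr, mulNmx, mulmxN).
rewrite !mul_row_col !(mulmxDl, mulmxBl, mulNmx, mul1mx, mulmx1).
rewrite -!(scalemxAl, scalemxAr) !mulmxA.
have -> : v^T *m W^T = (W *m v)^T by rewrite trmx_mul.
rewrite -!(mulmxA (_ *m diag_mx _) W v).
have -> : w^T *m u^T = (u *m w)^T by rewrite trmx_mul.
rewrite !diag_form !mxE /= !mulr1n.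
set p := W *m v.
have -> : \sum_j tau 0 j * (1 - v j 0 ^+ 2) =
          \sum_j tau 0 j - \sum_j tau 0 j * v j 0 * v j 0.
  by rewrite -sumrB; apply: eq_bigr => j _; ring.
have -> : \sum_i lambda 0 i *
      (2 * (a + b) * p i 0 * w i 0 - 2 * a * b * p i 0 ^+ 2 - 2 * w i 0 ^+ 2) =
    (a + b) * \sum_i lambda 0 i * w i 0 * p i 0
    + (a + b) * \sum_i lambda 0 i * p i 0 * w i 0
    - (2 * a * b) * \sum_i lambda 0 i * p i 0 * p i 0
    - 2 * \sum_i lambda 0 i * w i 0 * w i 0.
  by rewrite !mulr_sumr -big_split -!sumrB /=; apply: eq_bigr => i _; ring.
ring.
Qed.
End DualBlockForm.

Lemma interval_form_ge0 (R : realDomainType) (a b y p : R) : a <= y <= b ->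
  0 <= 2 * (a + b) * p * (y * p) - 2 * a * b * p ^+ 2 - 2 * (y * p) ^+ 2.
Proof.
case/andP => ay yb.
have -> : 2 * (a + b) * p * (y * p) - 2 * a * b * p ^+ 2 - 2 * (y * p) ^+ 2
          = 2 * (y - a) * (b - y) * p ^+ 2 by ring.
by rewrite mulr_ge0 ?sqr_ge0 // !mulr_ge0 ?subr_ge0.
Qed.

Lemma sqr_sg_le1 (R : numDomainType) (x : R) : Num.sg x ^+ 2 <= 1.
Proof. by rewrite sqr_sg; case: (x != 0); rewrite ?ler01 ?lexx. Qed.

Lemma l1normE_sg (R : realFieldType) k (g : 'cV[R]_k) :
  l1norm g = ((map_mx Num.sg g)^T *m g) 0 0.
Proof. by rewrite mxE; apply: eq_bigr => j _; rewrite !mxE normrEsg. Qed.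

Theorem mainTheorem9 (R : realFieldType) (n m : nat)
  (W : 'M[R]_(n, m)) (u : 'rV[R]_n) (a b : R) (hab : a <= b)
  (zeta : R) (lambda : 'rV[R]_n) (tau : 'rV[R]_m)
  (hlambda : forall i, 0 <= lambda 0 i) (htau : forall j, 0 <= tau 0 j)
  (hnsd : nsd (dual_block W u a b zeta lambda tau)) :
  forall y : 'rV[R]_n, (forall i, a <= y 0 i <= b) ->
    l1norm (W^T *m diag_mx y *m u^T) <= zeta / 2.
Proof.
move=> y hy; set g := W^T *m diag_mx y *m u^T.
pose v := map_mx Num.sg g; pose w := diag_mx y *m (W *m v).
have := nsd_form_le0 hnsd (col_mx (col_mx 1 v) w).
rewrite dual_block_form.
have tau_ge0 : 0 <= \sum_j tau 0 j * (1 - v j 0 ^+ 2).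
  by apply: sumr_ge0 => j _; rewrite mulr_ge0 // subr_ge0 mxE sqr_sg_le1.
have lambda_ge0 : 0 <= \sum_i lambda 0 i * (2 * (a + b) * (W *m v) i 0 * w i 0
    - 2 * a * b * (W *m v) i 0 ^+ 2 - 2 * w i 0 ^+ 2).
  apply: sumr_ge0 => i _; rewrite mulr_ge0 //.
  have -> : w i 0 = y 0 i * (W *m v) i 0 by rewrite /w mul_diag_mx mxE.
  exact: interval_form_ge0.
have uwE : (u *m w) 0 0 = l1norm g.
  have vgE : v^T *m g = (u *m w)^T.
    by rewrite /g /w !trmx_mul tr_diag_mx !mulmxA.
  by rewrite l1normE_sg -/v vgE [RHS]mxE.
lra.
Qed.
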